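(* Let $l$ and $m$ be positive integers, let $n = 2^m-1$, let $\pi : (\mathbb Z_2^m)^* \to \mathbb Z_{n}$ be a bijection, let $q\equiv 1\pmod{2n}$ be a prime power, let $\rho$ be a primitive element of $\mathbb F_q$, let $\Gamma = \operatorname{Cay}(G_{l,m,q},S(\pi))$ and let $v$ be a vertex of $\Gamma$. Then in the subgraph of $\Gamma$ induced on $\Gamma(v)$, every vertex $v+s$ with $s\in S_0$ has valency $2^m l-2$, and for each $g \in (\mathbb Z_2^m)^*$ every vertex $v+s$ with $s\in S_{g,\pi}$ has valency $$\sum_{\substack{h \in (\mathbb Z_2^m)^* \\ h \ne g}} c^n_q\big(\pi(h-g)-\pi(g),\ \pi(h)-\pi(g)\big).$$
   Context: For an additive group $A$, $A^*=A\setminus\{0\}$. $G_{l,m,q} = \mathbb Z_l \oplus \mathbb Z_2^m \oplus \mathbb F_q$. $S_0 = \{(g,0) : g \in (\mathbb Z_l \oplus \mathbb Z_2^m)^*\}$; $S_{z,\pi} = \{(0,z,\rho^j) : j\in\mathbb Z,\ j \equiv \pi(z) \pmod{n}\}$ for $z\in(\mathbb Z_2^m)^*$; $S(\pi) = S_0 \cup \bigcup_z S_{z,\pi}$. $\operatorname{Cay}(G_{l,m,q},S(\pi))$ has vertex set $G_{l,m,q}$, $x\sim y$ iff $y-x\in S(\pi)$; $\Gamma(v)$ is the set of neighbours of $v$. Cyclotomic classes and numbers: write $q = 2nr+1$; for $i \in \mathbb Z_n$, $C^n_q(i) = \{\rho^{nj+i} : 0\le j\le 2r-1\}$, and for $a,b\in\mathbb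 Z_n$, $c^n_q(a,b) = |(C^n_q(a)+1)\cap C^n_q(b)|$ (arithmetic on indices is in $\mathbb Z_n$). *)

From HB Require Import structures.
From mathcomp Require Import all_boot all_order all_algebra all_fingroup all_field.
Set Implicit Arguments. Unset Strict Implicit. Unset Printing Implicit Defensive.
Import GRing.Theory.
Local Open Scope ring_scope.

(* Z_k for k >= 1, as integers mod k: ordinals of (k.-1).+1 with Zp ring ops. *)
Notation "''Zm_' k" := 'I_((k.-1).+1) (at level 8, k at level 2, format "''Zm_' k").

Notation Gv l m F := (('Zm_l * 'rV['F_2]_m) * F)%type.

Definition S0 (l m : nat) (F : finFieldType) : {set Gv l m F} :=
  [set x : Gv l m F | (x.2 == 0) && (x.1 != 0)].

(* S_{z,pi} = {(0,z,rho^j) : j integer, j = pi(z) mod n}; since rho^j only depends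
   on j mod (q-1) and n | q-1, j ranges over 0 <= j < q-1. *)
Definition Sz (l m : nat) (F : finFieldType) (n : nat) (rho : F)
  (pi : 'rV['F_2]_m -> 'Zm_n) (z : 'rV['F_2]_m) : {set Gv l m F} :=
  [set x : Gv l m F | [&& x.1.1 == 0, x.1.2 == z &
     [exists j : 'I_(#|F|.-1), (j %% n == pi z)%N && (x.2 == rho ^+ j)]]].

Definition Sconn (l m : nat) (F : finFieldType) (n : nat) (rho : F)
  (pi : 'rV['F_2]_m -> 'Zm_n) : {set Gv l m F} :=
  S0 l m F :|: \bigcup_(z : 'rV['F_2]_m | z != 0) @Sz l m F n rho pi z.

Definition cay_adj (l m : nat) (F : finFieldType) (n : nat) (rho : F)
  (pi : 'rV['F_2]_m -> 'Zm_n) (x y : Gv l m F) : bool :=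
  (y - x) \in @Sconn l m F n rho pi.

Definition nbhd (l m : nat) (F : finFieldType) (n : nat) (rho : F)
  (pi : 'rV['F_2]_m -> 'Zm_n) (v : Gv l m F) : {set Gv l m F} :=
  [set y : Gv l m F | @cay_adj l m F n rho pi v y].

Definition local_valency (l m : nat) (F : finFieldType) (n : nat) (rho : F)
  (pi : 'rV['F_2]_m -> 'Zm_n) (v u : Gv l m F) : nat :=
  #|[set w in @nbhd l m F n rho pi v | @cay_adj l m F n rho pi u w]|.

(* cyclotomic class C^n_q(i) = {rho^(n j + i) : 0 <= j <= 2r-1}, q = 2nr+1 *)
Definition cyc_class (F : finFieldType) (rho : F) (n : nat) (i : nat) : {set F} :=
  let r := ((#|F|.-1) %/ (2 * n))%N in
  [set rho ^+ (n * j + i) | j : 'I_(2 * r)].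

Definition cyc_num (F : finFieldType) (rho : F) (n : nat) (a b : 'Zm_n) : nat :=
  #|[set x + 1 | x in @cyc_class F rho n a] :&: @cyc_class F rho n b|.

From HB Require Import structures.
From mathcomp Require Import all_boot all_order all_algebra all_fingroup all_field.
From mathcomp Require Import zify.
Import GRing.Theory.
Local Open Scope ring_scope.
Set Implicit Arguments. Unset Strict Implicit.

(* The local valency of [v + s] is the number of [t] in [S] with
   [t - s] in [S]. An element of [S] with zero [F]-coordinate lies in [S_0];
   otherwise it is [(0, z, x)] with [z] determined by the cyclotomic class of [x],
   since [pi] is injective and the classes are disjoint. For [s] in [S_0] this
   leaves exactly [S_0 \ {s}]. For [s = (0, g, sigma)] the common neighbours are
   the [(0, h, f)] with [h] outside [{0, g}], [f] in [C(pi h)] and [f - sigma] in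
   [C(pi (h - g))]: [-1] lies in [C(0)] because [2n] divides [q - 1], and
   [h - g = g] forces [h = 0] in characteristic 2. Dividing by [sigma], which
   lies in [C(pi g)], turns the count of such [f] into a cyclotomic number. *)

Lemma addrr_F2 m (g : 'rV['F_2]_m) : g + g = 0.
Proof. by rewrite -[g]scale1r -scalerDl addrr_pchar2 ?scale0r ?pchar_Fp. Qed.

Lemma expf_card_unit (F : finFieldType) (x : F) : x != 0 -> x ^+ #|F|.-1 = 1.
Proof.
move=> x_neq0; apply: (mulIf x_neq0).
by rewrite mul1r -exprSr prednK ?expf_card // ltnW ?finNzRing_gt1.
Qed.

Section TruncatedZmod.

Variable n : nat.
Hypothesis n_gt0 : (0 < n)%N.

Lemma ltn_Zm (a : 'Zm_n) : (a < n)%N.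
Proof. by rewrite -[X in (_ < X)%N]prednK. Qed.

Lemma val_Zm (a : 'Zm_n) : (a %% n)%N = a.
Proof. exact: modn_small (ltn_Zm a). Qed.

Lemma val_Zm_add (a b : 'Zm_n) : val (a + b) = ((a + b) %% n)%N.
Proof. by rewrite -[X in _ = (_ %% X)%N](prednK n_gt0). Qed.

End TruncatedZmod.

Section Cyclotomy.

Variables (F : finFieldType) (rho : F) (n : nat).
Hypothesis rho_prim : (#|F|.-1).-primitive_root rho.
Hypothesis n_dvd : (n %| #|F|.-1)%N.

Definition cyc_mem (k : 'Zm_n) (x : F) : bool :=
  [exists j : 'I_(#|F|.-1), (j %% n == k)%N && (x == rho ^+ j)].

Let n_gt0 : (0 < n)%N. Proof. exact: dvdn_gt0 (prim_order_gt0 rho_prim) n_dvd. Qed.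

Lemma cyc_mem_neq0 k x : cyc_mem k x -> x != 0.
Proof.
case/existsP=> j /andP[_ /eqP->]; rewrite expf_neq0 // (prim_root_eq0 rho_prim).
by rewrite -lt0n (prim_order_gt0 rho_prim).
Qed.

Lemma cyc_mem0 k : cyc_mem k 0 = false.
Proof. by apply/negbTE/negP => /cyc_mem_neq0; rewrite eqxx. Qed.

Lemma cyc_mem_exists x : x != 0 -> exists k, cyc_mem k x.
Proof.
move=> /expf_card_unit /(prim_rootP rho_prim) [j ->].
by exists (inZp j); apply/existsP; exists j; rewrite /= prednK ?eqxx.
Qed.

Lemma cyc_mem_uniq a b x : cyc_mem a x -> cyc_mem b x -> a = b.
Proof.
case/existsP=> i /andP[/eqP ia /eqP->] /existsP[j /andP[/eqP jb]].
rewrite (eq_prim_root_expr rho_prim) => /eqP /(congr1 (modn^~ n)).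
by rewrite !modn_dvdm // ia jb => /val_inj.
Qed.

Lemma cyc_memM a b x y : cyc_mem a x -> cyc_mem b y -> cyc_mem (a + b) (x * y).
Proof.
case/existsP=> i /andP[/eqP ia /eqP->] /existsP[j /andP[/eqP jb /eqP->]].
have ij_lt : ((i + j) %% #|F|.-1 < #|F|.-1)%N.
  by rewrite ltn_pmod ?(prim_order_gt0 rho_prim).
apply/existsP; exists (Ordinal ij_lt); rewrite (val_Zm_add n_gt0) /= -exprD prim_expr_mod //.
by rewrite modn_dvdm // -ia -jb modnDm !eqxx.
Qed.

Lemma cyc_memMr b c x y : cyc_mem b y -> cyc_mem c (x * y) = cyc_mem (c - b) x.
Proof.
move=> yb; apply/idP/idP=> [xyc | xcb]; last by rewrite -(subrK b c) cyc_memM.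
have [k xk] : exists k, cyc_mem k x.
  by apply: cyc_mem_exists; apply: contraTneq xyc => ->; rewrite mul0r cyc_mem0.
by rewrite -(cyc_mem_uniq (cyc_memM xk yb) xyc) addrK.
Qed.

Hypothesis n2_dvd : (2 * n %| #|F|.-1)%N.

(* The witness [rho ^+ (#|F|.-1 %/ 2)] is a square root of [1] other than [1]. *)
Lemma cyc_memN1 : cyc_mem 0 (-1).
Proof.
have [r r_def] := dvdnP n2_dvd.
have r_gt0 : (0 < r)%N by move: (prim_order_gt0 rho_prim); rewrite r_def; case: r {r_def}.
have rn_lt : (r * n < #|F|.-1)%N by rewrite r_def; nia.
have rn_neq1 : rho ^+ (r * n) != 1.
  rewrite -(expr0 rho) (eq_prim_root_expr rho_prim) mod0n modn_small //.
  by rewrite -lt0n muln_gt0 r_gt0 n_gt0.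
have : (rho ^+ (r * n)) ^+ 2 == 1.
  by rewrite -exprM -(prim_expr_order rho_prim) r_def mulnA mulnAC.
rewrite sqrf_eq1 (negbTE rn_neq1) eq_sym => rnN1.
by apply/existsP; exists (Ordinal rn_lt); rewrite /= modnMl eqxx.
Qed.

Lemma cyc_memN k x : cyc_mem k (- x) = cyc_mem k x.
Proof. by rewrite -mulrN1 (cyc_memMr _ _ cyc_memN1) subr0. Qed.

Lemma cyc_classE (k : 'Zm_n) x : (x \in cyc_class rho n k) = cyc_mem k x.
Proof.
have [r r_def] := dvdnP n2_dvd.
have r_div : (#|F|.-1 %/ (2 * n))%N = r by rewrite r_def mulnK ?muln_gt0.
rewrite /cyc_class /= r_div; apply/imsetP/existsP=> [[j _ ->] | [j /andP[/eqP jk /eqP->]]].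
  have lt : (n * j + k < #|F|.-1)%N.
    by have := ltn_ord j; have := ltn_Zm n_gt0 k; nia.
  by exists (Ordinal lt); rewrite /= mulnC modnMDl (val_Zm n_gt0) !eqxx.
have lt : (j %/ n < 2 * r)%N.
  by rewrite ltn_divLR //; have := ltn_ord j; nia.
by exists (Ordinal lt); rewrite //= -jk mulnC -divn_eq.
Qed.

Lemma card_cyc_shift (b c d : 'Zm_n) s : cyc_mem d s ->
  #|[set f | cyc_mem b f && cyc_mem c (f - s)]| = cyc_num rho (c - d) (b - d).
Proof.
move=> sd; have s_neq0 := cyc_mem_neq0 sd.
rewrite /cyc_num (can2_imset_pre _ (addrK 1) (subrK 1)).
rewrite -[RHS](card_preimset _ (mulIf (invr_neq0 s_neq0))); apply: eq_card => f.
rewrite !inE !cyc_classE -!(cyc_memMr _ _ sd) divfK //.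
by rewrite mulrBl mul1r divfK // andbC.
Qed.

Section LocalValency.

Variables (l m : nat) (pi : 'rV['F_2]_m -> 'Zm_n).
Hypothesis pi_inj : {in [pred z | z != 0] &, injective pi}.

Local Notation S := (@Sconn l m F n rho pi).

Lemma in_Sz z (x : Gv l m F) :
  (x \in @Sz l m F n rho pi z) = [&& x.1.1 == 0, x.1.2 == z & cyc_mem (pi z) x.2].
Proof. by rewrite inE. Qed.

Lemma in_Sconn (x : Gv l m F) :
  (x \in S) = if x.2 == 0 then x.1 != 0
              else [&& x.1.1 == 0, x.1.2 != 0 & cyc_mem (pi x.1.2) x.2].
Proof.
case: x => x1 x2; rewrite /Sconn in_setU inE /=.
have [-> | x2_neq0] /= := eqVneq x2 0.
  by case: bigcupP => [[z _]|]; rewrite ?orbF // in_Sz cyc_mem0 !andbF.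
apply/bigcupP/and3P => [[z z_neq0] | [x11 x12 xc]].
  by rewrite in_Sz => /and3P[-> /eqP-> ->].
by exists x1.2; rewrite // in_Sz x11 eqxx.
Qed.

Lemma cyc_mem_pi_inj z z' x : z != 0 -> z' != 0 ->
  cyc_mem (pi z) x -> cyc_mem (pi z') x -> z = z'.
Proof.
by move=> z_neq0 z'_neq0 xz xz'; apply: pi_inj; rewrite ?inE // (cyc_mem_uniq xz xz').
Qed.

Lemma local_valencyE (v s : Gv l m F) :
  @local_valency l m F n rho pi v (v + s) = #|[set t in S | t - s \in S]|.
Proof.
rewrite -(card_preimset [set t in S | t - s \in S] (subIr v)); apply: eq_card => w.
by rewrite /local_valency /nbhd /cay_adj !in_set opprD addrA.
Qed.

Lemma common_nbrs_S0 s : s \in S0 l m F -> [set t in S | t - s \in S] = S0 l m F :\ s.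
Proof.
case: s => a a3; rewrite inE /= => /andP[/eqP-> a_neq0].
apply/setP => -[b f]; rewrite [in LHS]in_set !in_Sconn in_setD1 in_set /= subr0.
have [-> | f_neq0] /= := eqVneq f 0.
  by rewrite subr_eq0 xpair_eqE eqxx andbT andbC.
rewrite andbF; apply/negbTE/negP.
case/and4P=> /and3P[/eqP b1_0 b2_neq0 f_b2] /eqP ba1_0 ba2_neq0 f_ba2.
have b2_ba2 := cyc_mem_pi_inj b2_neq0 ba2_neq0 f_b2 f_ba2.
have a1_0 : a.1 = 0 by apply/eqP; rewrite -oppr_eq0 -ba1_0 b1_0 sub0r.
have a2_0 : a.2 = 0 by apply: (subrI b.2); rewrite subr0 -b2_ba2.
by move: a_neq0; rewrite [a]surjective_pairing a1_0 a2_0 eqxx.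
Qed.

Lemma common_nbrs_Sz g s : g != 0 -> cyc_mem (pi g) s ->
  [set t in S | t - ((0, g), s) \in S] =
  [set t : Gv l m F | [&& t.1.1 == 0, (t.1.2 != 0) && (t.1.2 != g)
                        & cyc_mem (pi t.1.2) t.2 && cyc_mem (pi (t.1.2 - g)) (t.2 - s)]].
Proof.
move=> g_neq0 sg; have s_neq0 := cyc_mem_neq0 sg.
apply/setP => -[b f]; rewrite [in LHS]in_set !in_Sconn in_set /= subr0 subr_eq0.
have [-> | f_neq0] /= := eqVneq f 0.
  rewrite cyc_mem0 !andbF [0 == s]eq_sym (negbTE s_neq0) sub0r cyc_memN.
  apply/negbTE/negP.
  case/and4P=> b_neq0 /eqP b1_0 bg_neq0 s_bg.
  move/eqP: (cyc_mem_pi_inj bg_neq0 g_neq0 s_bg sg).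
  rewrite subr_eq addrr_F2 => /eqP b2_0.
  by move: b_neq0; rewrite [b]surjective_pairing b1_0 b2_0 eqxx.
have [-> | f_neq_s] := eqVneq f s.
  rewrite subrr cyc_mem0 !andbF; apply/negbTE/negP.
  case/andP=> /and3P[/eqP b1_0 b2_neq0 s_b2].
  rewrite [b]surjective_pairing b1_0 (cyc_mem_pi_inj b2_neq0 g_neq0 s_b2 sg).
  by rewrite subrr eqxx.
rewrite subr_eq0.
by case: (b.1 == 0); case: (b.2 == 0); case: (cyc_mem (pi b.2) f); rewrite /= ?andbF.
Qed.

Lemma card_S0 : (0 < l)%N -> #|S0 l m F| = (2 ^ m * l).-1.
Proof.
move=> l_gt0; have -> : S0 l m F = (fun a => (a, 0)) @: [set~ 0 : 'Zm_l * 'rV['F_2]_m].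
  apply/setP => -[a f]; rewrite !inE /=.
  apply/andP/imsetP => [[/eqP-> a_neq0] | [b /[!inE] b_neq0 [-> ->]]] //.
  by exists a; rewrite ?inE.
rewrite card_imset => [|a b [] //].
by rewrite cardsC1 card_prod card_mx card_Fp // card_ord prednK // mul1n mulnC.
Qed.

Lemma card_slice (Q : pred 'rV['F_2]_m) (R : 'rV['F_2]_m -> F -> bool) :
  #|[set t : Gv l m F | [&& t.1.1 == 0, Q t.1.2 & R t.1.2 t.2]]| =
  (\sum_(h | Q h) #|[set f | R h f]|)%N.
Proof.
have -> : [set t : Gv l m F | [&& t.1.1 == 0, Q t.1.2 & R t.1.2 t.2]] =
          (fun p => ((0, p.1), p.2)) @: [set p | Q p.1 && R p.1 p.2].
  apply/setP => -[[b1 b2] f]; rewrite !inE /=; apply/and3P/imsetP.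
    by case=> /eqP-> Qb Rb; exists (b2, f); rewrite ?inE ?Qb.
  by case=> -[h f'] /[!inE] /andP[Qh Rh] [-> -> ->].
rewrite card_imset => [|[h f] [h' f'] [-> ->] //].
under eq_bigr => h _ do rewrite -sum1_card.
by rewrite pair_big_dep -sum1_card; apply: eq_bigl => p; rewrite !inE.
Qed.

Lemma local_valency_S0 v s : (0 < l)%N -> s \in S0 l m F ->
  @local_valency l m F n rho pi v (v + s) = (2 ^ m * l - 2)%N.
Proof.
move=> l_gt0 sS0; rewrite local_valencyE common_nbrs_S0 //.
have := cardsD1 s (S0 l m F); rewrite sS0 card_S0 //; lia.
Qed.

Lemma local_valency_Sz v g s : g != 0 -> cyc_mem (pi g) s ->
  @local_valency l m F n rho pi v (v + ((0, g), s)) =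
  (\sum_(h | (h != 0%R) && (h != g)) cyc_num rho (pi (h - g) - pi g)%R (pi h - pi g)%R)%N.
Proof.
move=> g_neq0 sg; rewrite local_valencyE common_nbrs_Sz //.
rewrite (card_slice (fun h => (h != 0) && (h != g))
                    (fun h f => cyc_mem (pi h) f && cyc_mem (pi (h - g)) (f - s))).
by apply: eq_bigr => h _; apply: card_cyc_shift.
Qed.

End LocalValency.
End Cyclotomy.

Unset Implicit Arguments.

Theorem lemma2p3 (l m : nat) (hl : (0 < l)%N) (hm : (0 < m)%N)
  (pi : 'rV['F_2]_m -> 'Zm_(2 ^ m - 1))
  (pi_inj : {in [pred z | z != 0] &, injective pi})
  (pi_surj : forall k : 'Zm_(2 ^ m - 1), exists2 z, z != 0 & pi z = k)
  (q : nat) (F : finFieldType) (hF : #|F| = q)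
  (hq : q = 1 %[mod 2 * (2 ^ m - 1)])
  (rho : F) (hrho : (q.-1).-primitive_root rho)
  (v : Gv l m F) :
  (forall s, s \in S0 l m F ->
     @local_valency l m F (2 ^ m - 1) rho pi v (v + s) = (2 ^ m * l - 2)%N) /\
  (forall g : 'rV['F_2]_m, g != 0 -> forall s, s \in @Sz l m F (2 ^ m - 1) rho pi g ->
     @local_valency l m F (2 ^ m - 1) rho pi v (v + s) =
     (\sum_(h : 'rV['F_2]_m | (h != 0%R) && (h != g))
        @cyc_num F rho (2 ^ m - 1) ((pi (h - g) - pi g)%R) ((pi h - pi g)%R))%N).
Proof.
subst q; set n := (2 ^ m - 1)%N.
have n2_dvd : (2 * n %| #|F|.-1)%N.
  have F_gt0 : (0 < #|F|)%N by apply/card_gt0P; exists 0.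
  by rewrite -subn1 -eqn_mod_dvd // hq.
have n_dvd : (n %| #|F|.-1)%N := dvdn_trans (dvdn_mull 2 (dvdnn n)) n2_dvd.
split => [s sS0 | g g_neq0 [[s1 s2] s3]]; first exact: local_valency_S0.
by rewrite in_Sz /= => /and3P[/eqP-> /eqP-> sg]; apply: local_valency_Sz.
Qed.
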